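(* At a long-run equilibrium under perimeter control of the monocentric city model described in the context, in which the downtown area and the suburban interval $[0,x_f]$ are occupied with positive land rent (and $r_s(x_f)=0$ at the city boundary $x_f$): (i) $$N_d^{p*}=\frac{1}{\mu}\{y_d\}^{\frac{1-\mu}{\mu}}\left(w-C_s^{bp*}\right)^{-\frac1\mu}\left(r_s(0)+r_A\right)A_d,$$ $$N_s^{p*}(x)=\frac{1}{\mu}\{w-C_s^{bp*}-\alpha\tau x\}^{\frac{1-\mu}{\mu}}\left(w-C_s^{bp*}\right)^{-\frac1\mu}\left(r_s(0)+r_A\right)A_s(x);$$ (ii) $$x_f=\frac{w-C_s^{bp*}}{\alpha\tau}\left(\{r_A\}^{-\mu}-\{r_s(0)+r_A\}^{-\mu}\right)\{r_A\}^{\mu};$$ (iii) $r_s(0)$ is determined by $\int_0^{x_f}N_s^{p*}(x)\,dx=N-N_d^{p*}$.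
   Context: Monocentric city: downtown land $A_d>0$ (all jobs) and suburban locations $x\ge0$ with land $A_s(x)>0$; absentee landlords; $N$ homogeneous commuters ($N_d$ downtown, density $N_s(x)$ at $x$). Downtown commuting cost $\alpha T_d$; under perimeter control a suburban commuter at $x$ has commuting cost $C_s^{bp*}+\alpha\tau x$, where $C_s^{bp*}$ is the short-run equilibrium bathtub cost of downtown car traffic under perimeter control, $\alpha>0$ the value of time, $\tau=1/v_f$. Income $w$; utility $z^{1-\mu}a^{\mu}$, $\mu\in(0,1)$; budget $w=z+(r+r_A)a+C$, agricultural rent $r_A>0$, downtown rent $r_d+r_A$, rent $r_s(x)+r_A$ at $x$. Net incomes $y_d=w-\alpha T_d$, $y_s^p(x)=w-C_s^{bp*}-\alpha\tau x$; lot sizes $a=\mu y/(r+r_A)$; indirect utility $U=(1-\mu)^{1-\mu}\mu^\mu y(r+r_A)^{-\mu}$. Long-run equilibrium (utility $U^*$): $U_d=U^*$ if $N_d>0$ ($\le$ otherwise); $U_s(x)=U^*$ if $N_s(x)>0$ ($\le$ otherwise); land clearing $a_dN_d=A_d$ if $r_d>0$ ($\le$ if $r_d=0$), $a_s(x)N_s(x)=A_s(x)$ if $r_s(x)>0$ ($\le$ if $r_s(x)=0$); $N_d+\int_0^\infty N_s(x)dx=N$. *)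

From Stdlib Require Import Reals Lra.
From Coquelicot Require Import Coquelicot.
Open Scope R_scope.

Definition y_d (w alpha Td : R) : R := w - alpha * Td.
Definition y_sp (w Cs alpha tau x : R) : R := w - Cs - alpha * tau * x.

Definition lot (mu y r rA : R) : R := mu * y / (r + rA).

Definition util (mu y r rA : R) : R :=
  Rpower (1 - mu) (1 - mu) * Rpower mu mu * y * Rpower (r + rA) (- mu).

Definition params_ok (alpha tau mu rA Ad : R) (As : R -> R) : Prop :=
  0 < alpha /\ 0 < tau /\ 0 < mu < 1 /\ 0 < rA /\ 0 < Ad /\
  (forall x, 0 <= x -> 0 < As x).

(* Long-run equilibrium under perimeter control with utility Ustar.
   Rents r_d, r_s(x) are nonnegative (complementary slackness form),
   populations nonnegative. *)
Definition long_run_eq_p (w alpha tau Td Cs mu rA Ad N : R) (As : R -> R)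
    (Nd : R) (Ns : R -> R) (rd : R) (rs : R -> R) (Ustar : R) : Prop :=
  0 <= Nd /\ (forall x, 0 <= x -> 0 <= Ns x) /\
  0 <= rd /\ (forall x, 0 <= x -> 0 <= rs x) /\
  util mu (y_d w alpha Td) rd rA <= Ustar /\
  (0 < Nd -> util mu (y_d w alpha Td) rd rA = Ustar) /\
  (forall x, 0 <= x -> util mu (y_sp w Cs alpha tau x) (rs x) rA <= Ustar) /\
  (forall x, 0 <= x -> 0 < Ns x -> util mu (y_sp w Cs alpha tau x) (rs x) rA = Ustar) /\
  lot mu (y_d w alpha Td) rd rA * Nd <= Ad /\
  (0 < rd -> lot mu (y_d w alpha Td) rd rA * Nd = Ad) /\
  (forall x, 0 <= x -> lot mu (y_sp w Cs alpha tau x) (rs x) rA * Ns x <= As x) /\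
  (forall x, 0 <= x -> 0 < rs x -> lot mu (y_sp w Cs alpha tau x) (rs x) rA * Ns x = As x) /\
  (exists I, is_RInt_gen Ns (at_point 0) (Rbar_locally p_infty) I /\ Nd + I = N).

(** Where a location is occupied, land-market clearing with positive rent gives the
    density [(r + r_A) A / (mu y)], and equal utility with the inner edge [x = 0] of
    the suburbs ties the rent factor to the net income: [(r + r_A)^mu / y] is the same
    everywhere, which yields (i).  At the boundary the rent vanishes, so equating utility there with
    utility at [x = 0] and solving for [x_f] gives (ii).  Beyond [x_f] income is lower
    and rent is nonnegative, so utility falls short of [U*] and nobody lives there; the
    improper population integral therefore reduces to the integral over [[0, x_f]],
    which is (iii). *)
From Stdlib Require Import Reals Lra.
From Coquelicot Require Import Coquelicot.
Open Scope R_scope.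

Lemma Rpower_pos (x y : R) : 0 < Rpower x y.
Proof. unfold Rpower; apply exp_pos. Qed.

Lemma Rpower_inv_div (y mu : R) :
  0 < y -> mu <> 0 -> Rpower y (/ mu) / y = Rpower y ((1 - mu) / mu).
Proof.
  intros Hy Hmu.
  replace ((1 - mu) / mu) with (/ mu + - (1)) by (field; exact Hmu).
  rewrite Rpower_plus, Rpower_Ropp, Rpower_1 by exact Hy.
  reflexivity.
Qed.

Lemma Rpower_Ropp_antitone (a b c : R) :
  0 <= c -> 0 < a <= b -> Rpower b (- c) <= Rpower a (- c).
Proof.
  intros Hc Hab.
  rewrite !Rpower_Ropp.
  apply Rinv_le_contravar; [apply Rpower_pos | now apply Rle_Rpower_l].
Qed.

Lemma rent_factor_of_equal_util (mu y Y a b : R) :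
  0 < mu -> 0 < y -> 0 < Y -> 0 < a -> 0 < b ->
  y * Rpower a (- mu) = Y * Rpower b (- mu) ->
  a = Rpower y (/ mu) * Rpower Y (- / mu) * b.
Proof.
  intros Hmu Hy HY Ha Hb E.
  assert (Eln : ln y - mu * ln a = ln Y - mu * ln b).
  { apply (f_equal ln) in E.
    rewrite !ln_mult, !ln_Rpower in E by (apply Rpower_pos || assumption).
    lra. }
  unfold Rpower.
  rewrite <- (exp_ln a) by exact Ha.
  rewrite <- (exp_ln b) by exact Hb.
  rewrite <- !exp_plus.
  f_equal.
  apply Rmult_eq_reg_l with mu; [| lra].
  field_simplify; [lra | lra].
Qed.

Definition util_coef (mu : R) : R := Rpower (1 - mu) (1 - mu) * Rpower mu mu.

Lemma util_coef_pos (mu : R) : 0 < util_coef mu.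
Proof. apply Rmult_lt_0_compat; apply Rpower_pos. Qed.

Lemma utilE (mu y r rA : R) :
  util mu y r rA = util_coef mu * y * Rpower (r + rA) (- mu).
Proof. unfold util, util_coef; ring. Qed.

Lemma util_eq_cancel_coef (mu rA y r y0 r0 : R) :
  util mu y r rA = util mu y0 r0 rA ->
  y * Rpower (r + rA) (- mu) = y0 * Rpower (r0 + rA) (- mu).
Proof.
  rewrite !utilE; intros Hutil.
  apply Rmult_eq_reg_l with (util_coef mu); [| apply Rgt_not_eq, util_coef_pos].
  rewrite <- !Rmult_assoc; exact Hutil.
Qed.

Section Household.

Variables mu rA : R.
Hypothesis mu_pos : 0 < mu.
Hypothesis rA_pos : 0 < rA.

Lemma util_pos_iff (y r : R) : 0 < util mu y r rA <-> 0 < y.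
Proof.
  rewrite utilE.
  pose proof (util_coef_pos mu); pose proof (Rpower_pos (r + rA) (- mu)).
  split; intros Hu.
  - destruct (Rle_or_lt y 0); [| assumption].
    assert (util_coef mu * y <= 0) by nra.
    nra.
  - apply Rmult_lt_0_compat; [apply Rmult_lt_0_compat |]; assumption.
Qed.

Lemma util_lt_of_income_lt (y y' r : R) :
  y < y' -> 0 < y' -> 0 <= r -> util mu y r rA < util mu y' 0 rA.
Proof.
  intros Hyy Hy' Hr.
  assert (Hy'u : 0 < util mu y' 0 rA) by (apply util_pos_iff; exact Hy').
  destruct (Rle_or_lt y 0) as [Hy | Hy].
  - assert (~ 0 < util mu y r rA) by (rewrite util_pos_iff; lra).
    lra.
  - rewrite !utilE, Rplus_0_l in *.
    pose proof (util_coef_pos mu).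
    assert (Hrent : Rpower (r + rA) (- mu) <= Rpower rA (- mu))
      by (apply Rpower_Ropp_antitone; lra).
    apply Rle_lt_trans with (util_coef mu * y * Rpower rA (- mu)).
    + apply Rmult_le_compat_l; [nra | exact Hrent].
    + apply Rmult_lt_compat_r; [apply Rpower_pos | nra].
Qed.

Lemma unoccupied_of_income_lt_boundary (y yf r n U : R) :
  y < yf -> 0 <= r -> 0 <= n -> (0 < n -> util mu y r rA = U) ->
  util mu yf 0 rA = U -> 0 < U -> n = 0.
Proof.
  intros Hy Hr Hn HUn HUf HU.
  destruct (Rle_lt_or_eq _ _ Hn) as [Hpos | Hzero]; [exfalso | auto].
  assert (Hyf : 0 < yf) by (apply (util_pos_iff yf 0); lra).
  pose proof (util_lt_of_income_lt y yf r Hy Hyf Hr).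
  rewrite HUn in * by exact Hpos; lra.
Qed.

Lemma income_pos_of_lot_clearing (y r n A : R) :
  0 <= r -> 0 < n -> 0 < A -> lot mu y r rA * n = A -> 0 < y.
Proof.
  unfold lot; intros Hr Hn HA E.
  destruct (Rle_or_lt y 0) as [Hy | Hy]; [| exact Hy].
  assert (mu * y / (r + rA) <= 0).
  { unfold Rdiv; apply Rmult_le_0_r; [nra |].
    left; apply Rinv_0_lt_compat; lra. }
  nra.
Qed.

Lemma density_of_equal_util (y r n A y0 r0 : R) :
  0 < y -> 0 <= r -> 0 < y0 -> 0 <= r0 ->
  lot mu y r rA * n = A -> util mu y r rA = util mu y0 r0 rA ->
  n = / mu * Rpower y ((1 - mu) / mu) * Rpower y0 (- / mu) * (r0 + rA) * A.
Proof.
  intros Hy Hr Hy0 Hr0 Hclear Hutil.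
  assert (Hn : n = (r + rA) / (mu * y) * A)
    by (rewrite <- Hclear; unfold lot; field; lra).
  assert (Hrent : r + rA = Rpower y (/ mu) * Rpower y0 (- / mu) * (r0 + rA)).
  { apply rent_factor_of_equal_util; try lra.
    now apply util_eq_cancel_coef. }
  rewrite Hn, Hrent, <- Rpower_inv_div by lra.
  field; lra.
Qed.

Lemma boundary_of_equal_util (y0 c x r0 : R) :
  0 < c -> util mu (y0 - c * x) 0 rA = util mu y0 r0 rA ->
  x = y0 / c * (Rpower rA (- mu) - Rpower (r0 + rA) (- mu)) * Rpower rA mu.
Proof.
  intros Hc Hutil.
  apply util_eq_cancel_coef in Hutil as E.
  rewrite Rplus_0_l in E.
  assert (Hinv : Rpower rA (- mu) * Rpower rA mu = 1).
  { rewrite <- Rpower_plus, Rplus_opp_l. apply Rpower_O; exact rA_pos. }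
  apply Rmult_eq_reg_l with c; [| lra].
  transitivity (y0 * (Rpower rA (- mu) * Rpower rA mu)
                - (y0 - c * x) * (Rpower rA (- mu) * Rpower rA mu)).
  - rewrite Hinv; ring.
  - replace ((y0 - c * x) * (Rpower rA (- mu) * Rpower rA mu))
      with ((y0 - c * x) * Rpower rA (- mu) * Rpower rA mu) by ring.
    rewrite E; field; lra.
Qed.

End Household.

Lemma ex_RInt_of_is_RInt_gen (f : R -> R) (a b I : R) :
  a <= b -> is_RInt_gen f (at_point a) (Rbar_locally p_infty) I -> ex_RInt f a b.
Proof.
  intros Hab Hgen.
  destruct (Hgen (fun _ => True)) as [Q P HQ [M HM] HQP].
  { exists (mkposreal 1 Rlt_0_1); intros; trivial. }
  set (c := Rmax M b + 1).
  assert (HMc : M < c) by (unfold c; pose proof (Rmax_l M b); lra).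
  destruct (HQP a c HQ (HM c HMc)) as [l [Hl _]].
  apply (@ex_RInt_Chasles_1 R_CompleteNormedModule f a b c).
  - unfold c; pose proof (Rmax_r M b); lra.
  - exists l; exact Hl.
Qed.

Lemma is_RInt_gen_vanishing_tail (f : R -> R) (a b l : R) :
  (forall x, b < x -> f x = 0) -> is_RInt f a b l ->
  is_RInt_gen f (at_point a) (Rbar_locally p_infty) l.
Proof.
  intros Hzero Hab.
  replace l with (plus l 0) by (unfold plus; simpl; ring).
  apply (@is_RInt_gen_Chasles R_NormedModule _ _ _ _ f b).
  - now apply is_RInt_gen_at_point.
  - intros P [eps HP].
    exists (fun s => s = b) (fun t => b < t).
    + reflexivity.
    + exists b; auto.
    + intros s t -> Ht; exists 0; split.
      * apply is_RInt_ext with (fun _ => 0).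
        { intros x Hx; simpl in Hx.
          rewrite Rmin_left, Rmax_right in Hx by lra.
          symmetry; apply Hzero; lra. }
        pose proof (@is_RInt_const R_NormedModule b t 0) as Hconst.
        rewrite (scal_zero_r (t - b) : scal (t - b) (0 : R_NormedModule) = 0) in Hconst.
        exact Hconst.
      * apply HP, ball_center.
Qed.

Lemma is_RInt_of_is_RInt_gen_vanishing_tail (f : R -> R) (a b I : R) :
  a <= b -> (forall x, b < x -> f x = 0) ->
  is_RInt_gen f (at_point a) (Rbar_locally p_infty) I -> is_RInt f a b I.
Proof.
  intros Hab Hzero Hgen.
  pose proof (RInt_correct f a b (ex_RInt_of_is_RInt_gen f a b I Hab Hgen)) as Hint.
  replace I with (RInt f a b); [exact Hint |].
  rewrite <- (is_RInt_gen_unique f I Hgen).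
  symmetry; exact (is_RInt_gen_unique f _ (is_RInt_gen_vanishing_tail f a b _ Hzero Hint)).
Qed.

Theorem lemma5 (w alpha tau Td Cs mu rA Ad N : R) (As : R -> R)
    (Nd : R) (Ns : R -> R) (rd : R) (rs : R -> R) (Ustar xf : R) :
  params_ok alpha tau mu rA Ad As ->
  long_run_eq_p w alpha tau Td Cs mu rA Ad N As Nd Ns rd rs Ustar ->
  (* downtown occupied with positive rent *)
  0 < Nd -> 0 < rd ->
  (* suburban interval [0, xf] occupied, positive rent on [0, xf), boundary rent 0 *)
  0 < xf ->
  (forall x, 0 <= x <= xf -> 0 < Ns x) ->
  (forall x, 0 <= x < xf -> 0 < rs x) ->
  rs xf = 0 ->
  (* (i) *)
  Nd = / mu * Rpower (y_d w alpha Td) ((1 - mu) / mu)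
         * Rpower (w - Cs) (- / mu) * (rs 0 + rA) * Ad /\
  (forall x, 0 <= x < xf ->
     Ns x = / mu * Rpower (w - Cs - alpha * tau * x) ((1 - mu) / mu)
              * Rpower (w - Cs) (- / mu) * (rs 0 + rA) * As x) /\
  (* (ii) *)
  xf = (w - Cs) / (alpha * tau)
         * (Rpower rA (- mu) - Rpower (rs 0 + rA) (- mu)) * Rpower rA mu /\
  (* (iii) *)
  is_RInt Ns 0 xf (N - Nd).
Proof.
  intros [Hal [Hta [[Hmu _] [HrA [HAd HAs]]]]]
    [_ [HNs0 [Hrd0 [Hrs0 [_ [Ude [_ [Use [_ [Lde [_ [Lse [II [HI HNI]]]]]]]]]]]]]]
    HNd Hrd Hxf HNs Hrs Hrsf.
  assert (Hc : 0 < alpha * tau) by nra.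
  assert (Hrs00 : 0 <= rs 0) by (apply Hrs0; lra).
  assert (Hinc : forall x, 0 <= x < xf -> 0 < w - Cs - alpha * tau * x).
  { intros x Hx.
    apply (income_pos_of_lot_clearing mu rA Hmu HrA _ (rs x) (Ns x) (As x));
      [apply Hrs0 | apply HNs | apply HAs | apply Lse, Hrs]; lra. }
  assert (HY : 0 < w - Cs).
  { replace (w - Cs) with (w - Cs - alpha * tau * 0) by ring; apply Hinc; lra. }
  assert (HU0 : util mu (w - Cs) (rs 0) rA = Ustar).
  { rewrite <- (Use 0) by (try apply HNs; lra). unfold y_sp; f_equal; ring. }
  assert (HUf : util mu (w - Cs - alpha * tau * xf) 0 rA = Ustar)
    by (rewrite <- Hrsf; apply Use; [| apply HNs]; lra).
  split; [| split; [| split]].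
  - apply (density_of_equal_util mu rA Hmu HrA _ rd); try assumption.
    + apply (income_pos_of_lot_clearing mu rA Hmu HrA _ rd Nd Ad); auto.
    + now apply Lde.
    + now rewrite Ude, HU0.
  - intros x Hx.
    apply (density_of_equal_util mu rA Hmu HrA _ (rs x)); try assumption.
    + apply Hinc; exact Hx.
    + apply Hrs0; lra.
    + apply Lse, Hrs; lra.
    + rewrite HU0; apply Use; [| apply HNs]; lra.
  - apply (boundary_of_equal_util mu rA HrA _ _ _ _ Hc).
    now rewrite HUf, HU0.
  - assert (Hempty : forall x, xf < x -> Ns x = 0).
    { intros x Hx.
      apply (unoccupied_of_income_lt_boundary mu rA Hmu HrA
               (y_sp w Cs alpha tau x) (w - Cs - alpha * tau * xf) (rs x) _ Ustar);
        try exact HUf.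
      + unfold y_sp; nra.
      + apply Hrs0; lra.
      + apply HNs0; lra.
      + apply Use; lra.
      + rewrite <- HU0; apply util_pos_iff; exact HY. }
    replace (N - Nd) with II by lra.
    apply is_RInt_of_is_RInt_gen_vanishing_tail; [lra | exact Hempty | exact HI].
Qed.
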